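(* Let $m\le n$ and $1\le k\le m$. Suppose $X = X^*$ is a nonzero $k$-block positive operator on $\mathcal{H}_n\otimes\mathcal{H}_m$, with maximal eigenvalue $\lambda_{max}$ and minimal eigenvalue $\lambda_{min}$. Then \[ \frac{\lambda_{min}}{\lambda_{max}} \ge 1 - \frac{m}{k}. \]
   Context: $\mathcal{H}_d=\mathbb{C}^d$ and $m\le n$. The Schmidt rank $SR(|v\rangle)$ of $|v\rangle\in\mathcal{H}_n\otimes\mathcal{H}_m$ is the rank of its coefficient matrix. A Hermitian $X$ is $k$-block positive if $\langle v|X|v\rangle\ge0$ for all $|v\rangle$ with $SR(|v\rangle)\le k$. Equivalently, the map associated to $X$ via the Choi–Jamiołkowski isomorphism is $k$-positive. *)

From HB Require Import structures.
From mathcomp Require Import all_boot all_order all_algebra.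
Set Implicit Arguments. Unset Strict Implicit. Unset Printing Implicit Defensive.
Import Order.TTheory GRing.Theory Num.Theory.
Local Open Scope ring_scope.

(* Complex scalars: any numeric closed field (e.g. algC, or complex R). *)

Definition adjmx (C : numClosedFieldType) (p q : nat) (A : 'M[C]_(p, q)) : 'M[C]_(q, p) :=
  map_mx Num.conj A^T.

Definition is_hermitian (C : numClosedFieldType) (N : nat) (X : 'M[C]_N) : Prop :=
  adjmx X = X.

(* Vectors of H_n (x) H_m = C^(n*m) are row vectors 'rV_(n*m); the coordinate
   of e_i (x) f_j is at index mxvec_index i j, so the coefficient matrix of v
   is vec_mx v : 'M_(n,m). *)
Definition schmidt_rank (C : numClosedFieldType) (n m : nat) (v : 'rV[C]_(n * m)) : nat :=
  \rank (vec_mx v : 'M[C]_(n, m)).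
Arguments schmidt_rank {C} n m v.

Definition qform (C : numClosedFieldType) (N : nat) (X : 'M[C]_N) (v : 'rV[C]_N) : C :=
  ((map_mx Num.conj v) *m X *m v^T) 0 0.

Definition block_positive {C : numClosedFieldType} (n m k : nat) (X : 'M[C]_(n * m)) : Prop :=
  is_hermitian X /\
  forall v : 'rV[C]_(n * m), (schmidt_rank n m v <= k)%N -> 0 <= qform X v.
Arguments block_positive {C} n m k X.

From HB Require Import structures.
From mathcomp Require Import all_boot all_order all_algebra.
From mathcomp Require Import ring.
Set Implicit Arguments.
Unset Strict Implicit.
Unset Printing Implicit Defensive.
Import Order.TTheory GRing.Theory Num.Theory.
Local Open Scope ring_scope.

(** The matrix [X] is diagonalised as [P^* diag(d) P] and [lmin = d_j]; the
    row [u] of [P] with index [j] is a unit eigenvector for [lmin].  Viewed as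
    an [n x m] coefficient matrix, [u] has unit Frobenius norm, and the [m]
    cyclic windows of [k] consecutive columns cover every column exactly [k]
    times, so one window carries a fraction [q >= k/m] of that norm.
    Restricting (the conjugate of) [u] to this window yields [w] with Schmidt
    rank at most [k], [<u, w> = |w|^2 = q], and expanding [<w|X|w>] in the
    eigenbasis gives [0 <= <w|X|w> <= lmin q^2 + lmax (q - q^2)], that is
    [lmin / lmax >= 1 - 1/q >= 1 - m/k]. *)

Lemma adjmxM (C : numClosedFieldType) p q r
    (A : 'M[C]_(p, q)) (B : 'M[C]_(q, r)) :
  adjmx (A *m B) = adjmx B *m adjmx A.
Proof. by rewrite /adjmx trmx_mul map_mxM. Qed.

Lemma mxtrace_adjmxM (C : numClosedFieldType) p q (A B : 'M[C]_(p, q)) :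
  \tr (adjmx A *m B) = \sum_i \sum_j (A i j)^* * B i j.
Proof.
rewrite /mxtrace exchange_big; apply: eq_bigr => j _; rewrite !mxE.
by apply: eq_bigr => i _; rewrite !mxE.
Qed.

Lemma sum_mxvec_index (V : nmodType) n m (F : 'I_(n * m) -> V) :
  \sum_c F c = \sum_a \sum_b F (mxvec_index a b).
Proof.
rewrite pair_big /= (reindex (uncurry (@mxvec_index n m))) /=.
  by apply: eq_bigr => -[a b].
exact: curry_mxvec_bij.
Qed.

Lemma sum_eq_natr_mul (R : pzSemiRingType) (I : finType) (i0 : I) (F : I -> R) :
  \sum_i (i == i0)%:R * F i = F i0.
Proof.
rewrite (bigD1 i0) //= eqxx mul1r big1 ?addr0 // => i /negPf ->.
by rewrite mul0r.
Qed.

Lemma hermitian_spectral (C : numClosedFieldType) N (X : 'M[C]_N) :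
  is_hermitian X ->
  let P := spectralmx X in let d := spectral_diag X in
  [/\ X = adjmx P *m diag_mx d *m P, P *m adjmx P = 1%:M,
      adjmx P *m P = 1%:M & forall i, d 0 i \is Num.real].
Proof.
move=> hX P d; have Pu : P \is unitarymx := spectral_unitarymx X.
have hsX : X \is hermsymmx.
  by apply/is_hermitianmxP; rewrite expr0 scale1r; exact/esym.
split.
- rewrite /adjmx -invmx_unitary //.
  exact/orthomx_spectralP/hermitian_normalmx.
- exact/unitarymxP.
- by rewrite /adjmx -invmx_unitary // mulVmx // unitarymx_unit.
- by move=> i; apply: (mxOverP (hermitian_spectral_diag_real hsX)).
Qed.

Section Spectral.
Variables (C : numClosedFieldType) (N : nat) (X P : 'M[C]_N) (d : 'rV[C]_N).
Hypotheses (XE : X = adjmx P *m diag_mx d *m P)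
  (PPt : P *m adjmx P = 1%:M) (PtP : adjmx P *m P = 1%:M).

Lemma eigenvalue_spectral_diag i : eigenvalue X (d 0 i).
Proof.
apply/eigenvalueP; exists (row i P).
  rewrite -row_mul XE !mulmxA PPt mul1mx mul_diag_mx.
  by apply/rowP => j; rewrite !mxE.
apply/eqP => /(congr1 (mulmx^~ (adjmx P))); rewrite -row_mul PPt mul0mx.
by move/rowP/(_ i); rewrite !mxE eqxx => /eqP; rewrite oner_eq0.
Qed.

Lemma eigenvalue_spectral_diagP c : eigenvalue X c -> exists i, c = d 0 i.
Proof.
case/eigenvalueP => v vX v_neq0; set z := v *m adjmx P.
have zP : z *m P = v by rewrite -mulmxA PtP mulmx1.
have zd : z *m diag_mx d = c *: z.
  by rewrite /z scalemxAl -vX XE !mulmxA -(mulmxA _ P) PPt mulmx1.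
clearbody z.
have [j zj] : exists j, z 0 j != 0.
  apply/existsP; apply: contraR v_neq0 => /existsPn z0.
  rewrite -zP (_ : z = 0) ?mul0mx //.
  by apply/rowP => j; rewrite mxE; apply/eqP/negPn/z0.
exists j; move/rowP/(_ j): zd; rewrite mul_mx_diag !mxE => e.
by apply: (mulIf zj); rewrite -e mulrC.
Qed.

Lemma qform_spectral w : qform X w = \sum_i d 0 i * `|(P *m w^T) i 0| ^+ 2.
Proof.
rewrite /qform XE !mulmxA.
have -> : map_mx Num.conj w *m adjmx P = (map_mx Num.conj (P *m w^T))^T.
  by rewrite map_trmx trmx_mul trmxK map_mxM.
rewrite -!mulmxA mulmxA mul_mx_diag !mxE; apply: eq_bigr => i _.
by rewrite !mxE normCK mulrAC mulrC [_^* * _]mulrC.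
Qed.

Lemma sum_sqr_norm_unitary (w : 'rV[C]_N) :
  \sum_i `|(P *m w^T) i 0| ^+ 2 = \sum_c `|w 0 c| ^+ 2.
Proof.
have sqr_sum (v : 'cV[C]_N) : \sum_i `|v i 0| ^+ 2 = (adjmx v *m v) 0 0.
  by rewrite mxE; apply: eq_bigr => i _; rewrite !mxE normCK mulrC.
rewrite sqr_sum adjmxM -mulmxA (mulmxA (adjmx P)) PtP mul1mx -sqr_sum.
by apply: eq_bigr => c _; rewrite mxE.
Qed.

Lemma qform_le_spectral lmax j (w : 'rV[C]_N) : (forall i, d 0 i <= lmax) ->
  qform X w <= d 0 j * `|(P *m w^T) j 0| ^+ 2
                + lmax * (\sum_c `|w 0 c| ^+ 2 - `|(P *m w^T) j 0| ^+ 2).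
Proof.
move=> d_le; rewrite qform_spectral -sum_sqr_norm_unitary.
rewrite (bigD1 j) //= [in X in lmax * X](bigD1 j) //=.
rewrite [in X in lmax * X]addrC addrK lerD2l mulr_sumr.
by apply: ler_sum => i _; rewrite ler_wpM2r ?exprn_ge0.
Qed.

Lemma mxtrace_spectral : \tr X = \sum_i d 0 i.
Proof. by rewrite XE mxtrace_mulC mulmxA PPt mul1mx mxtrace_diag. Qed.

Lemma exists_spectral_diag_gt0 : (forall i, d 0 i \is Num.real) -> X != 0 ->
  0 <= \tr X -> exists i, 0 < d 0 i.
Proof.
move=> d_real X_neq0 trX_ge0.
have [i d_gt0 | d_le0] := pickP (fun i => 0 < d 0 i); first by exists i.
have {}d_le0 i : 0 <= - d 0 i by rewrite oppr_ge0 real_leNgt ?real0 ?d_le0.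
have sumNd0 : \sum_i - d 0 i = 0.
  apply/eqP; rewrite eq_le sumr_ge0 // andbT sumrN oppr_le0.
  by rewrite -mxtrace_spectral.
have d0 : d = 0.
  by apply/rowP => i; apply/eqP; rewrite mxE -oppr_eq0 (psumr_eq0P _ sumNd0).
by case/eqP: X_neq0; rewrite XE d0 raddf0 mulmx0 mul0mx.
Qed.

Lemma sum_sqr_norm_row_unitary j : \sum_c `|row j P 0 c| ^+ 2 = 1.
Proof.
have := congr1 (fun A : 'M_N => A j j) PPt; rewrite !mxE eqxx mulr1n => <-.
by apply: eq_bigr => c _; rewrite !mxE normCK.
Qed.

End Spectral.

Lemma qform_delta (C : numClosedFieldType) N (X : 'M[C]_N) c :
  qform X (delta_mx 0 c) = X c c.
Proof.
have conj_delta : map_mx Num.conj (delta_mx 0 c : 'rV[C]_N) = delta_mx 0 c.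
  apply/matrixP => i j; rewrite !mxE.
  by case: (_ && _); rewrite ?conjC1 ?conjC0.
by rewrite /qform conj_delta -rowE trmx_delta -colE !mxE.
Qed.

Lemma schmidt_rank_delta (C : numClosedFieldType) n m (c : 'I_(n * m)) :
  schmidt_rank n m (delta_mx 0 c : 'rV[C]_(n * m)) = 1%N.
Proof.
by case/mxvec_indexP: c => a b; rewrite /schmidt_rank vec_mx_delta mxrank_delta.
Qed.

Lemma block_positive_diag_ge0 (C : numClosedFieldType) n m k
    (X : 'M[C]_(n * m)) :
  (0 < k)%N -> block_positive n m k X -> forall c, 0 <= X c c.
Proof.
by move=> k_gt0 [_ bpX] c; rewrite -qform_delta bpX ?schmidt_rank_delta.
Qed.

Section Windows.
Variables (R : pzRingType) (m k : nat) (km : (k <= m.+1)%N).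

Definition window_mx (t : 'I_m.+1) : 'M[R]_(k, m.+1) :=
  \matrix_(s, b) (b == t + widen_ord km s)%:R.

Lemma window_mx_mul_tr t : window_mx t *m (window_mx t)^T = 1%:M.
Proof.
apply/matrixP => s s'; rewrite !mxE.
under eq_bigr do rewrite !mxE.
by rewrite sum_eq_natr_mul (inj_eq (addrI t)).
Qed.

Lemma sum_window_proj : \sum_t (window_mx t)^T *m window_mx t = k%:R%:M.
Proof.
apply/matrixP => b b'; rewrite summxE !mxE.
under eq_bigr do rewrite !mxE.
rewrite exchange_big /=.
under eq_bigr => s _.
  under eq_bigr => t _ do rewrite !mxE -[b == _]subr_eq [_ - _ == _]eq_sym.
  rewrite sum_eq_natr_mul subrK; over.
by rewrite sumr_const card_ord eq_sym -!mulrnA mulnC.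
Qed.

End Windows.
Arguments window_mx {R m k} km t.

Lemma map_window_mx (R S : pzRingType) m k (km : (k <= m.+1)%N)
    (f : {rmorphism R -> S}) t :
  map_mx f (window_mx km t : 'M[R]_(k, m.+1)) = window_mx km t.
Proof. by apply/matrixP => s b; rewrite !mxE rmorph_nat. Qed.

Section LocalProjection.
Variables (C : numClosedFieldType) (n m k : nat) (km : (k <= m.+1)%N).
Variable r : 'rV[C]_(n * m.+1).
Hypothesis r_unit : \sum_c `|r 0 c| ^+ 2 = 1.

(* Conjugated so that [(r *m (mxvec (R *m D t))^T) 0 0] is the squared
   Frobenius norm of [R *m D t] (see [weightE]). *)
Let R : 'M[C]_(n, m.+1) := vec_mx (map_mx Num.conj r).
Let W t : 'M[C]_(k, m.+1) := window_mx km t.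
Let D t := (W t)^T *m W t.
Let weight t := \tr (adjmx R *m R *m D t).

Let adjmx_D t : adjmx (D t) = D t.
Proof. by rewrite adjmxM /adjmx trmxK -map_trmx /W !map_window_mx. Qed.

Let R_unit : \tr (adjmx R *m R) = 1.
Proof.
rewrite mxtrace_adjmxM -r_unit sum_mxvec_index.
by apply: eq_bigr => a _; apply: eq_bigr => b _; rewrite !mxE conjCK normCK.
Qed.

Let weightE t : \tr (adjmx (R *m D t) *m (R *m D t)) = weight t.
Proof.
rewrite adjmxM adjmx_D -!mulmxA mxtrace_mulC -!mulmxA.
by rewrite window_mx_mul_tr mulmx1 mxtrace_mulC /weight /D !mulmxA.
Qed.

Let weight_ge0 t : 0 <= weight t.
Proof.
rewrite -weightE mxtrace_adjmxM; do 2!apply: sumr_ge0 => ? _.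
by rewrite mulrC mul_conjC_ge0.
Qed.

Let sum_weight : \sum_t weight t = k%:R.
Proof.
rewrite -raddf_sum /= -mulmx_sumr sum_window_proj.
by rewrite mul_mx_scalar mxtraceZ R_unit mulr1.
Qed.

Let exists_heavy_window : exists t, k%:R <= m.+1%:R * weight t.
Proof.
have [t heavy | light] := pickP (fun t => k%:R <= m.+1%:R * weight t).
  by exists t.
have {}light t : m.+1%:R * weight t < k%:R.
  by rewrite real_ltNge ?light ?ger0_real ?mulr_ge0.
have nonempty : has predT (index_enum 'I_m.+1).
  by apply/hasP; exists ord0; rewrite ?mem_index_enum.
have := ltr_sum nonempty (fun t _ => light t).
by rewrite -mulr_sumr sum_weight sumr_const card_ord mulr_natl ltxx.
Qed.

Lemma exists_heavy_local_vector : exists w : 'rV[C]_(n * m.+1),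
  [/\ (schmidt_rank n m.+1 w <= k)%N,
      \sum_c `|w 0 c| ^+ 2 = (r *m w^T) 0 0 &
      k%:R <= m.+1%:R * (r *m w^T) 0 0].
Proof.
have [t heavy] := exists_heavy_window.
have rwE : (r *m (mxvec (R *m D t))^T) 0 0 = weight t.
  rewrite /weight -mulmxA mxtrace_adjmxM mxE sum_mxvec_index.
  apply: eq_bigr => a _; apply: eq_bigr => b _.
  by rewrite [_^T _ _]mxE mxvecE !mxE conjCK.
exists (mxvec (R *m D t)); rewrite rwE; split => //.
  rewrite /schmidt_rank mxvecK mulmxA.
  exact: leq_trans (mxrankM_maxr _ _) (rank_leq_row _).
rewrite -weightE mxtrace_adjmxM sum_mxvec_index.
by apply: eq_bigr => a _; apply: eq_bigr => b _; rewrite mxvecE normCK mulrC.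
Qed.

End LocalProjection.

Lemma eigenvalue_ratio_bound (F : numFieldType) (K M q lmin lmax : F) :
  0 < K -> 0 <= q -> K <= M * q -> 0 < lmax ->
  0 <= lmin * q ^+ 2 + lmax * (q - q ^+ 2) -> 1 - M / K <= lmin / lmax.
Proof.
move=> K_gt0 q_ge0 KMq lmax_gt0 h.
have q_gt0 : 0 < q.
  rewrite lt_def q_ge0 andbT; apply: contraTneq KMq => ->.
  by rewrite mulr0 lt_geF.
have {}h : lmax * (q - 1) <= lmin * q.
  have factor : lmin * q ^+ 2 + lmax * (q - q ^+ 2)
              = q * (lmin * q - lmax * (q - 1)) by ring.
  by rewrite -subr_ge0 -(pmulr_rge0 _ q_gt0) -factor.
apply: (@le_trans _ _ (1 - q^-1)).
  by rewrite lerD2l lerN2 ler_pdivlMr // mulrC ler_pdivrMr.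
rewrite ler_pdivlMr // -(ler_pM2r q_gt0).
by have -> : (1 - q^-1) * lmax * q = lmax * (q - 1) by field; rewrite gt_eqF.
Qed.

Theorem corollary5p5 (C : numClosedFieldType) (n m k : nat)
  (X : 'M[C]_(n * m)) (lmax lmin : C) :
  (m <= n)%N -> (1 <= k)%N -> (k <= m)%N ->
  is_hermitian X -> X != 0 -> block_positive n m k X ->
  eigenvalue X lmax -> (forall c, eigenvalue X c -> c <= lmax) ->
  eigenvalue X lmin -> (forall c, eigenvalue X c -> lmin <= c) ->
  1 - m%:R / k%:R <= lmin / lmax.
Proof.
move=> _ k_gt0; case: m X => [|m] X km; first by move: (leq_trans k_gt0 km).
move=> hX X_neq0 bpX _ max_ge lmin_eig _.
have [XE PPt PtP d_real] := hermitian_spectral hX.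
set P := spectralmx X in XE PPt PtP; set d := spectral_diag X in XE d_real.
have d_le i : d 0 i <= lmax := max_ge _ (eigenvalue_spectral_diag XE PPt i).
have lmax_gt0 : 0 < lmax.
  have trX_ge0 : 0 <= \tr X.
    by apply: sumr_ge0 => c _; apply: block_positive_diag_ge0 bpX c.
  have [i d_gt0] := exists_spectral_diag_gt0 XE PPt d_real X_neq0 trX_ge0.
  exact: lt_le_trans d_gt0 (d_le i).
have [j ->] := eigenvalue_spectral_diagP XE PPt PtP lmin_eig.
have [w [w_rank w_norm heavy]] :=
  exists_heavy_local_vector km (sum_sqr_norm_row_unitary PPt j).
have yE : (P *m w^T) j 0 = (row j P *m w^T) 0 0 by rewrite -row_mul [RHS]mxE.
have q_ge0 : 0 <= (row j P *m w^T) 0 0.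
  by rewrite -w_norm sumr_ge0 // => c _; rewrite exprn_ge0.
apply: (eigenvalue_ratio_bound _ q_ge0 heavy lmax_gt0); first by rewrite ltr0n.
have := le_trans (proj2 bpX w w_rank) (qform_le_spectral XE PtP j w d_le).
by rewrite yE w_norm ger0_norm.
Qed.
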